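(* In Algorithm MV (see context), if the binary BA decision (the output of the binary BA run in step (3)) is $\mathit{false}$, then WHP every correct process receives a message $\langle\textsc{converge},\mathit{true},QC_v\rangle_j$ from some validly sampled process $p_j$.
   Context: System and adversary: a well-known static set $\Pi$ of $n$ processes; an adversary may adaptively corrupt up to $f=(\frac13-\epsilon)n$ processes during a run, where $\frac{1}{2\ln n}<\epsilon<\frac13$. Corrupted (Byzantine) processes may deviate arbitrarily; uncorrupted processes are correct. Once the adversary corrupts a process it cannot replace messages that process already sent while correct. Every pair of processes is connected by a reliable authenticated link; the network is asynchronous. There is a trusted PKI; the adversary is computationally bounded; $\langle v\rangle_i$ denotes $v$ signed by $p_i$. Validated committee sampling: each $p_i$ has a private function $\mathit{sample}_i(s,\lambda)$ returning $\langle v_i,\sigma_i\rangle$ with $v_i\in\{\mathit{true},\mathit{false}\}$ ($p_i$ is ''sampled'' iff $v_i=\mathit{true}$, probability $\lambda/n$) and an unforgeable publicly verifiable proof $\sigma_i$; ''validly sampled $p_j$'' means the message carries a valid such proof. Let $C(s,\lambda)$ be the committee for $s,\lambda$. Parameters: $\lambda=8\ln n$; $\frac1\lambda<d<\frac\epsilon3-\frac1{3\lambda}$; $W=\lceil(\frac23+3d)\lambda\rceil$, $B=\lfloor(\frac13-d)\lambda\rfloor$. Assumed WHP for each committee: (S3) at least $W$ members are correct; (S4) at most $B$ members are Byzantine; (S5) any two $W$-subsets of the committee intersect in at least $B+1$ processes. WHP means with probability tending to $1$ as $n\to\infty$. The binary BA used is a black-box Binary Strong BA WHP: WHP strong unanimity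 (if all correct processes propose the same bit, any deciding correct process decides it), agreement, and termination. Algorithm MV (code for $p_i$ with input $v_i$; local: $\mathit{count}=0$, empty sets $\mathit{init\text{-}set},\mathit{init\text{-}values\text{-}set},\mathit{converge\text{-}set}$): (1) If $p_i$ is sampled for $(\textsc{init},\lambda)$, broadcast $\langle\textsc{init},v_i\rangle_i$. (2) On receiving $\langle\textsc{init},v_j\rangle_j$ from validly sampled $p_j$: add $j$ to $\mathit{init\text{-}set}$, $v_j$ to $\mathit{init\text{-}values\text{-}set}$. If $p_i$ is sampled for $(\textsc{converge},\lambda)$ and $|\mathit{init\text{-}set}|=W$ for the first time: if $\mathit{init\text{-}values\text{-}set}=\{v_i\}$, batch the $W$ signed \textsc{init} messages into $QC_{v_i}$ and send $\langle\textsc{converge},\mathit{true},QC_{v_i}\rangle_i$ to all; else send $\langle\textsc{converge},\mathit{false},\bot\rangle_i$ to all. (3) On receiving $\langle\textsc{converge},\mathit{is\_content},QC_v\rangle_j$ from validly sampled $p_j$: add $j$ to $\mathit{converge\text{-}set}$; if $\mathit{is\_content}=\mathit{true}$ increment $\mathit{count}$. When $|\mathit{converge\text{-}set}|=W$ for the first time: $\mathit{alert}\gets(\mathit{count}<B+1)$; run binary BA on $\mathit{alert}$; if the output is $\mathit{true}$ decide $\bot$; else wait for some $\langle\textsc{converge},\mathit{true},QC_v\rangle_j$ from a validly sampled $p_j$ and decide $v$. A valid $QC_v$ consists of $W$ signed \textsc{init} messages on $v$ from $W$ distinct validly sampled processes. *)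

From HB Require Import structures.
From mathcomp Require Import all_boot all_order all_algebra.
From mathcomp Require Import all_classical all_reals all_analysis.
Set Implicit Arguments. Unset Strict Implicit. Unset Printing Implicit Defensive.
Import Order.TTheory GRing.Theory Num.Theory.
Local Open Scope ring_scope.

Inductive seed := INIT | CONVERGE.

Section Model.
Variables (n : nat) (V : eqType).

(* Message payloads.  [MInit v] is <INIT,v>;  [MConv b q] is
   <CONVERGE, b, q>, where the quorum certificate q is the batch of
   signed INIT messages, represented by their (signer, value) pairs;
   bottom is the empty batch. The sender's signature / sampling proof is
   modelled by the authenticated sender field of a receipt. *)
Inductive msg :=
  | MInit of V
  | MConv of bool & seq ('I_n * V).

Record run := Run {
  corrupt : {set 'I_n};              (* processes corrupted at some point *)
  input : 'I_n -> V;
  sampled : seed -> 'I_n -> bool;     (* first component of sample_i(s,lambda) *)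
  signs_init : 'I_n -> V -> bool;
  sent : 'I_n -> 'I_n -> msg -> Prop; (* sent j k m : p_j sent m to p_k *)
  recv : 'I_n -> nat -> option ('I_n * msg);
     (* recv i t = Some (j, m) : the t-th receive event of p_i delivers m
        authenticated as coming from p_j (None: no receipt in slot t) *)
  ba_prop : 'I_n -> option bool;
  ba_dec : 'I_n -> option bool
}.

Variable r : run.

Definition correct (i : 'I_n) : bool := i \notin corrupt r.
Definition committee (s : seed) : {set 'I_n} := [set i | sampled r s i].

Definition init_of (e : option ('I_n * msg)) : option ('I_n * V) :=
  if e is Some (j, MInit v) then
    if sampled r INIT j then Some (j, v) else None
  else None.

Definition conv_of (e : option ('I_n * msg)) : option ('I_n * bool) :=
  if e is Some (j, MConv b _) then
    if sampled r CONVERGE j then Some (j, b) else None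
  else None.

(* processed INIT messages among the first t receive events of p_i
   (one per sender: later duplicates from the same sender are ignored);
   map fst = init-set, map snd = init-values-set (with multiplicity). *)
Fixpoint inits_upto (i : 'I_n) (t : nat) : seq ('I_n * V) :=
  match t with
  | 0 => [::]
  | t'.+1 =>
    let s := inits_upto i t' in
    match init_of (recv r i t') with
    | Some (j, v) => if j \in map fst s then s else rcons s (j, v)
    | None => s
    end
  end.

Fixpoint convs_upto (i : 'I_n) (t : nat) : seq ('I_n * bool) :=
  match t with
  | 0 => [::]
  | t'.+1 =>
    let s := convs_upto i t' in
    match conv_of (recv r i t') with
    | Some (j, b) => if j \in map fst s then s else rcons s (j, b)
    | None => s
    end
  end.

(* |init-set| = W for the first time when processing receive event t *)
Definition init_reach (W : nat) (i : 'I_n) (t : nat) : Prop :=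
  (size (inits_upto i t) < W)%N /\ size (inits_upto i t.+1) = W.

Definition conv_reach (W : nat) (i : 'I_n) (t : nat) : Prop :=
  (size (convs_upto i t) < W)%N /\ size (convs_upto i t.+1) = W.

Definition conv_count (i : 'I_n) (t : nat) : nat :=
  count (fun p => p.2) (convs_upto i t).

(* the CONVERGE message sent in step (2) given the processed INIT batch *)
Definition conv_msg (i : 'I_n) (s : seq ('I_n * V)) : msg :=
  if undup (map snd s) == [:: input r i] then MConv true s
  else MConv false [::].

(* what a correct process sends, according to steps (1) and (2) *)
Definition protocol_send (W : nat) (i k : 'I_n) (m : msg) : Prop :=
  (sampled r INIT i /\ m = MInit (input r i)) \/
  (sampled r CONVERGE i /\
   exists t, init_reach W i t /\ m = conv_msg i (inits_upto i t.+1)).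

Definition valid_run (W B : nat) : Prop :=
  [/\
      forall i k m, correct i -> (sent r i k m <-> protocol_send W i k m),
      forall i v, correct i -> (signs_init r i v = sampled r INIT i && (v == input r i)),
      forall j k v, sent r j k (MInit v) -> signs_init r j v &
      (* authenticated links *)
      forall i t j m, recv r i t = Some (j, m) -> sent r j i m] /\
  [/\ (* reliable links: every message sent to a correct process is delivered *)
      (forall j i m, correct i -> sent r j i m -> exists t, recv r i t = Some (j, m)) &
      (* step (3): correct processes run BA on alert = (count < B+1) when
         |converge-set| = W for the first time, and only then *)
      (forall i, correct i ->
        (forall t, conv_reach W i t ->
            ba_prop r i = Some (conv_count i t.+1 < B.+1)%N) /\
        (ba_prop r i <> None -> exists t, conv_reach W i t))].

(* properties (S3), (S4), (S5) of committee C(s,lambda) *)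
Definition committee_ok (W B : nat) (s : seed) : Prop :=
  [/\ (W <= #|[set i in committee s | correct i]|)%N,
      (#|[set i in committee s | ~~ correct i]| <= B)%N &
      forall X Y : {set 'I_n}, X \subset committee s -> Y \subset committee s ->
        #|X| = W -> #|Y| = W -> (B < #|X :&: Y|)%N].

(* Binary Strong BA: strong unanimity, agreement, termination *)
Definition ba_ok : Prop :=
  [/\ forall b, (forall i, correct i -> ba_prop r i = Some b) ->
        forall i, correct i -> ba_dec r i <> None -> ba_dec r i = Some b,
      forall i k b1 b2, correct i -> correct k ->
        ba_dec r i = Some b1 -> ba_dec r k = Some b2 -> b1 = b2 &
      (forall i, correct i -> ba_prop r i <> None) ->
        forall i, correct i -> ba_dec r i <> None].

Definition valid_QC (W : nat) (v : V) (q : seq ('I_n * V)) : Prop :=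
  [/\ size q = W, uniq (map fst q) &
      all (fun p => [&& sampled r INIT p.1, p.2 == v & signs_init r p.1 v]) q].

Definition ba_decides_false : Prop :=
  exists i, correct i /\ ba_dec r i = Some false.

Definition receives_conv_true (W : nat) (i : 'I_n) : Prop :=
  exists t j v q, recv r i t = Some (j, MConv true q) /\
    sampled r CONVERGE j /\ valid_QC W v q.

End Model.

Section Params.
Variable R : realType.
Definition lambda_of (n : nat) : R := 8 * ln (n%:R : R).
Definition W_of (d lam : R) : nat := `|Num.ceil ((2/3 + 3 * d) * lam)|%N.
Definition B_of (d lam : R) : nat := `|Num.floor ((1/3 - d) * lam)|%N.
End Params.

From HB Require Import structures.
From mathcomp Require Import all_boot all_order all_algebra.
From mathcomp Require Import all_classical all_reals all_analysis.
From mathcomp Require Import lra.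
Import Order.TTheory GRing.Theory Num.Theory numFieldNormedType.Exports.

(* Proof idea.  The theorem splits into a deterministic statement about a
   single run and a probabilistic wrapper.

   Deterministic part (one run whose committees satisfy (S3), (S4) and whose
   binary BA is correct).  By (S3) every correct process eventually hears
   from W correct members of each committee, so each reaches
   |init-set| = W, and then (through the CONVERGE messages of W correct
   committee members) |converge-set| = W and proposes a value to the BA.
   If every correct process proposed alert = true, strong unanimity would
   force the decision true; so if the BA decides false, some correct p_k
   counted at least B+1 CONVERGE messages with is_content = true.  By (S4)
   at most B of their senders are Byzantine, so one sender p_j is correct.
   A correct p_j sends <CONVERGE,true,QC> only with QC its batch of W
   signed INIT messages, all on its own input, i.e. a valid QC; and it sent
   that message to every process, so by reliable links every correct
   process receives it.

   Probabilistic part.  The good event is the intersection of the three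
   WHP events (committees for INIT and CONVERGE, correct BA), restricted
   to the n for which the model assumptions hold; a finite intersection of
   WHP events, modified for finitely many n, is still WHP. *)

Set Implicit Arguments. Unset Strict Implicit.

Section FirstPerSenderLog.
Variables (I X : eqType) (g : nat -> option (I * X)).

Fixpoint sender_log (t : nat) : seq (I * X) :=
  match t with
  | 0 => [::]
  | t'.+1 =>
    let s := sender_log t' in
    match g t' with
    | Some (j, x) => if j \in map fst s then s else rcons s (j, x)
    | None => s
    end
  end.

Lemma sender_log_uniq t : uniq (map fst (sender_log t)).
Proof.
elim: t => //= t IH; case: (g t) => [[j x]|] //; case: ifP => // hj.
by rewrite map_rcons rcons_uniq hj IH.
Qed.

(* One event adds at most one entry, so the size crosses every threshold. *)
Lemma sender_log_size_step t : (size (sender_log t.+1) <= (size (sender_log t)).+1)%N.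
Proof. by rewrite /=; case: (g t) => [[j x]|] //; case: ifP => // _; rewrite size_rcons. Qed.

Lemma sender_log_mono t t' : (t <= t')%N -> {subset sender_log t <= sender_log t'}.
Proof.
move/subnK <-; elim: (t' - t)%N => [|k IH] p hp //=.
case: (g (k + t)%N) => [[j x]|]; last exact: IH.
by case: ifP => _; rewrite ?mem_rcons ?inE IH ?orbT.
Qed.

Lemma sender_log_records t j x : g t = Some (j, x) -> j \in map fst (sender_log t.+1).
Proof. by move=> /= ->; case: ifP => // _; rewrite map_rcons mem_rcons inE eqxx. Qed.

Lemma sender_log_source t p : p \in sender_log t -> exists t', (t' < t)%N /\ g t' = Some p.
Proof.
elim: t => //= t IH.
have older : p \in sender_log t -> exists t', (t' < t.+1)%N /\ g t' = Some p.
  by move/IH => [t' [lt_t' gt']]; exists t'; rewrite ltnW.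
case E: (g t) => [[j x]|] //; case: ifP => // _.
by rewrite mem_rcons inE => /orP [/eqP ->|]; [exists t|exact: older].
Qed.

Lemma sender_log_covers (S : seq I) : (forall j, j \in S -> exists t x, g t = Some (j, x)) ->
  exists T, {subset S <= map fst (sender_log T)}.
Proof.
elim: S => [|a S IH] heard; first by exists 0%N.
have [T hT] := IH (fun j hj => heard j (mem_behead (s := a :: S) hj)).
have [t [x hx]] := heard a (mem_head _ _).
exists (maxn T t.+1) => j; rewrite inE => /orP [/eqP ->|hj].
  have /mapP [p hp ->] := sender_log_records hx.
  by rewrite map_f // (sender_log_mono (leq_maxr _ _)).
have /mapP [p hp ->] := hT _ hj.
by rewrite map_f // (sender_log_mono (leq_maxl _ _)).
Qed.

Lemma sender_log_crosses W T : (0 < W)%N -> (W <= size (sender_log T))%N ->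
  exists t, (size (sender_log t) < W)%N /\ size (sender_log t.+1) = W.
Proof.
move=> W_gt0; elim: T => [|T IH] hW.
  by move: hW; rewrite leqn0 => /eqP W0; rewrite W0 in W_gt0.
case: (leqP W (size (sender_log T))) => hT; first exact: IH.
exists T; split => //; apply/eqP; rewrite eqn_leq hW andbT.
exact: leq_trans (sender_log_size_step T) _.
Qed.

End FirstPerSenderLog.

Lemma sender_log_reaches (n : nat) (X : eqType) (g : nat -> option ('I_n * X))
    (S : {set 'I_n}) W :
  (0 < W)%N -> (W <= #|S|)%N -> (forall j, j \in S -> exists t x, g t = Some (j, x)) ->
  exists t, (size (sender_log g t) < W)%N /\ size (sender_log g t.+1) = W.
Proof.
move=> W_gt0 W_le heard.
have [T coverT] : exists T, {subset enum S <= map fst (sender_log g T)}.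
  by apply: sender_log_covers => j; rewrite mem_enum; exact: heard.
apply: (sender_log_crosses (T := T)) => //.
rewrite (leq_trans W_le) // cardE -(size_map fst) uniq_leq_size //.
  exact: enum_uniq.
Qed.

Lemma inits_upto_log n V (r : run n V) i t :
  inits_upto r i t = sender_log (fun t => init_of r (recv r i t)) t.
Proof. by elim: t => //= t ->. Qed.

Lemma convs_upto_log n V (r : run n V) i t :
  convs_upto r i t = sender_log (fun t => conv_of r (recv r i t)) t.
Proof. by elim: t => //= t ->. Qed.

Lemma conv_msg_shape n V (r : run n V) i s : exists b q, conv_msg r i s = MConv b q.
Proof. by rewrite /conv_msg; case: ifP => _; do 2 eexists. Qed.

Section OneRun.
Variables (n : nat) (V : eqType) (r : run n V) (W B : nat).
Hypotheses (W_gt0 : (0 < W)%N) (Hrun : valid_run r W B)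
  (Hinit : committee_ok r W B INIT) (Hconv : committee_ok r W B CONVERGE).

Lemma correct_sends i k m : correct r i -> sent r i k m <-> protocol_send r W i k m.
Proof. by case: Hrun => [[h _ _ _] _]; exact: h. Qed.

Lemma delivered j i m : correct r i -> sent r j i m -> exists t, recv r i t = Some (j, m).
Proof. by case: Hrun => [_ [h _]]; exact: h. Qed.

Lemma received_was_sent i t j m : recv r i t = Some (j, m) -> sent r j i m.
Proof. by case: Hrun => [[_ _ _ h] _]; exact: h. Qed.

Lemma init_signed j k v : sent r j k (@MInit n V v) -> signs_init r j v.
Proof. by case: Hrun => [[_ _ h _] _]; exact: h. Qed.

Lemma ba_proposal k t : correct r k -> conv_reach r W k t ->
  ba_prop r k = Some (conv_count r k t.+1 < B.+1)%N.
Proof. by case: Hrun => _ [_ h] ck; exact: (h k ck).1. Qed.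

Lemma correct_broadcast i k k' m : correct r i -> sent r i k m -> sent r i k' m.
Proof. by move=> ci /(correct_sends _ _ ci) send_k; apply/(correct_sends k' m ci). Qed.

(* (S3) for INIT: every correct process reaches |init-set| = W. *)
Lemma correct_init_reach k : correct r k -> exists t, init_reach r W k t.
Proof.
move=> ck; case: Hinit => S3 _ _.
have heard j : j \in [set i in committee r INIT | correct r i] ->
    exists t x, init_of r (recv r k t) = Some (j, x).
  rewrite !inE => /andP [sj cj].
  have [t ht] : exists t, recv r k t = Some (j, MInit _ (input r j)).
    by apply: delivered => //; apply/correct_sends => //; left.
  by exists t, (input r j); rewrite /init_of ht sj.
have [t reach] := sender_log_reaches W_gt0 S3 heard.
by exists t; rewrite /init_reach !inits_upto_log.
Qed.

(* (S3) for CONVERGE: every correct process reaches |converge-set| = W. *)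
Lemma correct_conv_reach k : correct r k -> exists t, conv_reach r W k t.
Proof.
move=> ck; case: Hconv => S3 _ _.
have heard j : j \in [set i in committee r CONVERGE | correct r i] ->
    exists t x, conv_of r (recv r k t) = Some (j, x).
  rewrite !inE => /andP [sj cj].
  have [tj reach_j] := correct_init_reach cj.
  have [b [q msg_j]] := conv_msg_shape r j (inits_upto r j tj.+1).
  have [t ht] : exists t, recv r k t = Some (j, MConv b q).
    by apply: delivered => //; apply/correct_sends => //; right; split => //; exists tj.
  by exists t, b; rewrite /conv_of ht sj.
have [t reach] := sender_log_reaches W_gt0 S3 heard.
by exists t; rewrite /conv_reach !convs_upto_log.
Qed.

(* Strong unanimity: a decision false means some correct process proposed
   alert = false, i.e. counted more than B contentful CONVERGE messages. *)
Lemma some_correct_content_count : ba_ok r -> ba_decides_false r ->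
  exists k t, [/\ correct r k, conv_reach r W k t & (B < conv_count r k t.+1)%N].
Proof.
move=> [unanimity _ _] [i0 [ci0 dec_false]].
apply: contrapT => none_high.
have all_alert k : correct r k -> ba_prop r k = Some true.
  move=> ck; have [t reach] := correct_conv_reach ck.
  rewrite (ba_proposal ck reach) ltnS leqNgt.
  by case: ltnP => // high; case: none_high; exists k, t.
have decided : ba_dec r i0 <> None by rewrite dec_false.
by have := unanimity true all_alert i0 ci0 decided; rewrite dec_false.
Qed.

Lemma convs_upto_source k t p : p \in convs_upto r k t ->
  exists t' q, recv r k t' = Some (p.1, MConv p.2 q) /\ sampled r CONVERGE p.1.
Proof.
rewrite convs_upto_log => /sender_log_source [t' [_]]; rewrite /conv_of.
case E: (recv r k t') => [[j [v|b q]]|] //; case: ifP => // sj [<-].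
by exists t', q.
Qed.

(* (S4): more than B contentful entries include one from a correct sender. *)
Lemma correct_content_sender k t : (B < conv_count r k t)%N ->
  exists j, correct r j /\ (j, true) \in convs_upto r k t.
Proof.
move=> high; case: Hconv => _ S4 _.
set content := [seq p.1 | p <- convs_upto r k t & p.2].
case: (boolP (has (correct r) content)) => [/hasP [j] | no_correct].
  move=> /mapP [[j' b]]; rewrite mem_filter /= => /andP [b_true logged] -> cj.
  by exists j'; move: b_true logged => ->.
suff : (size content <= B)%N by rewrite size_map size_filter leqNgt high.
apply: leq_trans S4; rewrite cardE uniq_leq_size //.
  have uniq_log : uniq (map fst (convs_upto r k t)).
    by rewrite convs_upto_log; exact: sender_log_uniq.
  by apply: subseq_uniq uniq_log; exact/map_subseq/filter_subseq.
move=> j hj; rewrite mem_enum !inE; apply/andP; split.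
  move: hj => /mapP [p]; rewrite mem_filter => /andP [_ /convs_upto_source].
  by move=> [t' [q [_ sampled_p]]] ->.
by apply: contra no_correct => cj; apply/hasP; exists j.
Qed.

Lemma correct_batch_valid j t : correct r j -> init_reach r W j t ->
  undup (map snd (inits_upto r j t.+1)) = [:: input r j] ->
  valid_QC r W (input r j) (inits_upto r j t.+1).
Proof.
move=> cj [_ sizeW] same_value; split => //.
  by rewrite inits_upto_log; exact: sender_log_uniq.
apply/allP => p hp.
have p_value : p.2 = input r j.
  by apply/eqP; rewrite -mem_seq1 -same_value mem_undup map_f.
move: hp; rewrite inits_upto_log => /sender_log_source [t' [_]].
rewrite /init_of; case E: (recv r j t') => [[j' [v|]]|] //.
case: ifP => // sj' [hp]; rewrite -hp /= in p_value *.
rewrite sj' p_value eqxx -p_value /=.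
exact/init_signed/(received_was_sent E).
Qed.

Lemma correct_content_valid j k q : correct r j -> sent r j k (MConv true q) ->
  exists v, valid_QC r W v q.
Proof.
move=> cj /(correct_sends _ _ cj) [[_ //]|[_ [t [reach]]]].
rewrite /conv_msg; case: ifP => // /eqP same_value [->].
by exists (input r j); exact: correct_batch_valid.
Qed.

Theorem decide_false_delivers_content : ba_ok r -> ba_decides_false r ->
  forall i, correct r i -> receives_conv_true r W i.
Proof.
move=> Hba Hfalse i ci.
have [k [t [ck _ high]]] := some_correct_content_count Hba Hfalse.
have [j [cj logged]] := correct_content_sender high.
have [t' [q [recv_k sj]]] := convs_upto_source logged.
have sent_k := received_was_sent recv_k.
have [v valid_q] := correct_content_valid cj sent_k.
have [ti recv_i] := delivered ci (correct_broadcast _ cj sent_k).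
by exists ti, j, v, q.
Qed.

End OneRun.

Unset Implicit Arguments.
Local Open Scope classical_set_scope.
Local Open Scope ring_scope.

(* The intersection of two WHP events is WHP (union bound on complements). *)
Lemma whp_setI (R : realType) dsp (Omega : nat -> measurableType dsp)
  (P : forall n, probability (Omega n) R) (A B : forall n, set (Omega n)) :
  (forall n, measurable (A n)) -> (forall n, measurable (B n)) ->
  (P n (A n)) @[n --> \oo] --> 1%E -> (P n (B n)) @[n --> \oo] --> 1%E ->
  (P n (A n `&` B n)) @[n --> \oo] --> 1%E.
Proof.
move=> mA mB hA hB.
have mAB n : measurable (A n `&` B n) by apply: measurableI.
have finE n (X : set (Omega n)) : measurable X -> P n X = (fine (P n X))%:E.
  by move=> mX; rewrite fineK // fin_num_measure.
move/fine_cvgP: hA => [_ hA]; move/fine_cvgP: hB => [_ hB].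
apply/fine_cvgP; split; first by apply: nearW => n; exact: fin_num_measure (mAB n).
apply: (@squeeze_cvgr _ _ _ _ (fun n => fine (P n (A n)) + fine (P n (B n)) - 1) (fun=> 1)).
- apply: nearW => n /=; apply/andP; split; last first.
    by have := probability_le1 (P n) (mAB n); rewrite finE // lee_fin.
  have union_bound : (P n (~` (A n `&` B n)) <= P n (~` A n) + P n (~` B n))%E.
    by rewrite setCI; exact: measureU2 (measurableC (mA n)) (measurableC (mB n)).
  move: union_bound; rewrite !probability_setC //.
  rewrite (finE _ _ (mA n)) (finE _ _ (mB n)) (finE _ _ (mAB n)).
  by rewrite -!EFinB -EFinD lee_fin => h; lra.
- rewrite -[X in _ --> X](_ : 1 + 1 - 1 = 1); last lra.
  by apply: cvgB; [apply: cvgD|apply: cvg_cst].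
- exact: cvg_cst.
Qed.

Lemma whp_eventually (R : realType) dsp (Omega : nat -> measurableType dsp)
  (P : forall n, probability (Omega n) R) (X : forall n, set (Omega n)) (M : nat) :
  (P n (X n)) @[n --> \oo] --> 1%E ->
  (P n (if (M <= n)%N then X n else set0)) @[n --> \oo] --> 1%E.
Proof.
move=> h; apply: cvg_trans h; apply: near_eq_cvg.
by near=> n; rewrite ifT //; near: n; exists M.
Unshelve. all: by end_near.
Qed.

Lemma W_of_gt0 {R : realType} {n : nat} {d : R} : (2 <= n)%N ->
  1 / lambda_of R n < d -> (0 < W_of d (lambda_of R n))%N.
Proof.
move=> n_ge2 d_gt; rewrite /W_of absz_gt0.
have lam_gt0 : 0 < lambda_of R n by rewrite /lambda_of mulr_gt0 // ln_gt0 // ltr1n.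
have d_gt0 : 0 < d by apply: lt_trans d_gt; rewrite divr_gt0.
rewrite gt_eqF // ceil_gt0 mulr_gt0 //; lra.
Qed.

Theorem mainTheorem3 (R : realType) (V : eqType) (dsp : measure_display)
  (Omega : nat -> measurableType dsp)
  (P : forall n, probability (Omega n) R)
  (eps d : nat -> R)
  (run_of : forall n, Omega n -> run n V) :
  (exists N, forall n, (N <= n)%N ->
     [/\ 1 / (2 * ln (n%:R : R)) < eps n < 1 / 3,
         1 / lambda_of R n < d n < eps n / 3 - 1 / (3 * lambda_of R n),
         (forall (s : seed) (i : 'I_n),
            measurable [set w | sampled (run_of n w) s i] /\
            P n [set w | sampled (run_of n w) s i] = (lambda_of R n / n%:R)%:E),
         (forall w, valid_run (run_of n w)
                      (W_of (d n) (lambda_of R n)) (B_of (d n) (lambda_of R n))) &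
         (forall w, (#|corrupt (run_of n w)|%:R <= (1 / 3 - eps n) * n%:R :> R))]) ->
  (forall s : seed, exists G : forall n, set (Omega n),
     (forall n, measurable (G n)) /\
     (P n (G n)) @[n --> \oo] --> 1%E /\
     (forall n w, G n w -> committee_ok (run_of n w)
                   (W_of (d n) (lambda_of R n)) (B_of (d n) (lambda_of R n)) s)) ->
  (exists G : forall n, set (Omega n),
     (forall n, measurable (G n)) /\
     (P n (G n)) @[n --> \oo] --> 1%E /\
     (forall n w, G n w -> ba_ok (run_of n w))) ->
  exists G : forall n, set (Omega n),
     (forall n, measurable (G n)) /\
     (P n (G n)) @[n --> \oo] --> 1%E /\
     (forall n w, G n w -> ba_decides_false (run_of n w) ->
        forall i, correct (run_of n w) i ->
          receives_conv_true (run_of n w) (W_of (d n) (lambda_of R n)) i).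
Proof.
move=> [N model] committees [Gba [m_ba [whp_ba ba_good]]].
have [Gi [m_i [whp_i init_good]]] := committees INIT.
have [Gc [m_c [whp_c conv_good]]] := committees CONVERGE.
exists (fun n => if (maxn N 2 <= n)%N then Gi n `&` Gc n `&` Gba n else set0).
split; [|split].
- by move=> n; case: ifP => _; do ?apply: measurableI.
- apply: whp_eventually; apply: whp_setI => //; last exact: whp_setI.
  by move=> n; apply: measurableI.
- move=> n w; case: ifP => // + [[good_i good_c] good_ba].
  rewrite geq_max => /andP [n_ge_N n_ge2].
  have [_ /andP [d_gt _] _ valid _] := model n n_ge_N.
  exact: decide_false_delivers_content (W_of_gt0 n_ge2 d_gt) (valid w)
    (init_good n w good_i) (conv_good n w good_c) (ba_good n w good_ba).
Qed.
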